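(* Let $b>a>0$ and define $g_{a,b}:\mathbb{R}\to(0,\infty)$ by $g_{a,b}(t)=\frac{b^t-a^t}{t}$ for $t\neq0$ and $g_{a,b}(0)=b-a$. Then: (i) $g_{a,b}$ is logarithmically convex on $(-\infty,\infty)$, i.e. $[\ln g_{a,b}(t)]''\ge 0$ for all $t\in\mathbb{R}$; (ii) $g_{a,b}$ is $3$-log-convex on $(-\infty,0)$ and $3$-log-concave on $(0,\infty)$, i.e. $[\ln g_{a,b}(t)]'''\ge0$ for $t<0$ and $[\ln g_{a,b}(t)]'''\le0$ for $t>0$; (iii) the function $$h_{a,b}(t)=\begin{cases}\dfrac{b^t\ln b-a^t\ln a}{b^t-a^t}-\dfrac1t,& t\neq0,\\[0.5em] \ln\sqrt{ab},& t=0\end{cases}$$ (which equals $[\ln g_{a,b}(t)]'$) is increasing on $(-\infty,\infty)$ and satisfies $\lim_{t\to-\infty}h_{a,b}(t)=\ln a$ and $\lim_{t\to\infty}h_{a,b}(t)=\ln b$.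
   Context: A $k$-times differentiable function $f>0$ on an interval $I$ is called $k$-log-convex on $I$ if $[\ln f(t)]^{(k)}\ge0$ on $I$, and $k$-log-concave on $I$ if $[\ln f(t)]^{(k)}\le0$ on $I$. Logarithmic convexity means $2$-log-convexity. *)

From Stdlib Require Import Reals.
Open Scope R_scope.

(* g_{a,b}(t) = (b^t - a^t)/t for t <> 0, and its continuous value
   ln b - ln a at t = 0. *)
Definition g_ab (a b t : R) : R :=
  if Req_EM_T t 0 then ln b - ln a
  else (Rpower b t - Rpower a t) / t.

Definition h_ab (a b t : R) : R :=
  if Req_EM_T t 0 then ln (sqrt (a * b))
  else (Rpower b t * ln b - Rpower a t * ln a) / (Rpower b t - Rpower a t) - 1 / t.

Definition lng_ab (a b t : R) : R := ln (g_ab a b t).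

(** Writing [c = (ln a + ln b) / 2] and [d = (ln b - ln a) / 2 > 0], one has
    [g_{a,b}(t) = e^(ct) * 2d * sinh(dt) / (dt)], so
    [ln g_{a,b}(t) = ct + ln(2d) + phi(dt)] with [phi x = ln (sinh x / x)].
    Every claim therefore reduces to a property of the single function [phi]:
    - [phi' = coth x - 1/x] is odd and [|phi'(x) - 1| <= 1/x] for [x > 0],
      which gives [h_{a,b} = (ln g_{a,b})'] and its limits [ln a], [ln b];
    - [phi'' = 1/x^2 - 1/sinh^2 x > 0] because [|sinh x| > |x|], which gives
      (i) and the monotonicity of [h_{a,b}];
    - [phi''' = -2/x^3 + 2 cosh x / sinh^3 x] is odd and nonpositive for
      [x > 0] because [x^3 cosh x <= sinh^3 x], which gives (ii).
    At [x = 0] the derivatives of [phi] and [phi'] are obtained as limits of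
    the derivatives, through a L'Hopital rule proved from Cauchy's mean value
    theorem. *)

From Stdlib Require Import Reals Lra Psatz.
Open Scope R_scope.

(** * Derivative calculus

    The library rules for [derivable_pt_lim] are stated for [plus_fct],
    [mult_fct], ...; these restatements on lambda terms let [apply] infer the
    functions from the goal, and [deriv_eq] separates the computation of a
    derivative from the simplification of its value. *)

Lemma deriv_eq f x l l' : derivable_pt_lim f x l -> l = l' -> derivable_pt_lim f x l'.
Proof. intros H <-; exact H. Qed.

Lemma deriv_plus f g x lf lg : derivable_pt_lim f x lf -> derivable_pt_lim g x lg ->
  derivable_pt_lim (fun y => f y + g y) x (lf + lg).
Proof. apply (derivable_pt_lim_plus f g). Qed.

Lemma deriv_minus f g x lf lg : derivable_pt_lim f x lf -> derivable_pt_lim g x lg ->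
  derivable_pt_lim (fun y => f y - g y) x (lf - lg).
Proof. apply (derivable_pt_lim_minus f g). Qed.

Lemma deriv_mult f g x lf lg : derivable_pt_lim f x lf -> derivable_pt_lim g x lg ->
  derivable_pt_lim (fun y => f y * g y) x (lf * g x + f x * lg).
Proof. apply (derivable_pt_lim_mult f g). Qed.

Lemma deriv_div f g x lf lg : derivable_pt_lim f x lf -> derivable_pt_lim g x lg -> g x <> 0 ->
  derivable_pt_lim (fun y => f y / g y) x ((lf * g x - lg * f x) / (g x * g x)).
Proof. intros Hf Hg Hx. exact (derivable_pt_lim_div f g x lf lg Hf Hg Hx). Qed.

Lemma deriv_comp f g x lf lg : derivable_pt_lim f x lf -> derivable_pt_lim g (f x) lg ->
  derivable_pt_lim (fun y => g (f y)) x (lg * lf).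
Proof. apply (derivable_pt_lim_comp f g). Qed.

Lemma deriv_rescale f k t l : derivable_pt_lim f (k * t) l ->
  derivable_pt_lim (fun s => f (k * s)) t (k * l).
Proof.
  intros Hf. eapply deriv_eq.
  - apply (deriv_comp (fun s => k * s) f); [|exact Hf].
    apply deriv_mult; [apply derivable_pt_lim_const | apply derivable_pt_lim_id].
  - cbv beta; ring.
Qed.

Lemma deriv_local f g x l :
  (exists del, 0 < del /\ forall y, Rabs (y - x) < del -> f y = g y) ->
  derivable_pt_lim g x l -> derivable_pt_lim f x l.
Proof.
  intros [del [Hdel Hfg]] Hg eps Heps. destruct (Hg eps Heps) as [d Hd].
  assert (Hmin : 0 < Rmin d del) by (apply Rmin_pos; [apply cond_pos | lra]).
  exists (mkposreal _ Hmin); simpl; intros h Hh Hlt.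
  assert (Hh_d : Rabs h < d) by (apply Rlt_le_trans with (1 := Hlt); apply Rmin_l).
  assert (Hh_del : Rabs h < del) by (apply Rlt_le_trans with (1 := Hlt); apply Rmin_r).
  rewrite !Hfg; [now apply Hd | rewrite Rminus_diag, Rabs_R0; lra |].
  now replace (x + h - x) with h by ring.
Qed.

Lemma deriv_ext f g x l : (forall y, f y = g y) ->
  derivable_pt_lim g x l -> derivable_pt_lim f x l.
Proof. intros H. apply deriv_local. exists 1; split; [lra | auto]. Qed.

Lemma deriv_off0 f g x l : x <> 0 -> (forall y, y <> 0 -> f y = g y) ->
  derivable_pt_lim g x l -> derivable_pt_lim f x l.
Proof.
  intros Hx Hfg. apply deriv_local. exists (Rabs x); split; [now apply Rabs_pos_lt|].
  intros y Hy. apply Hfg. intros ->. rewrite Rminus_0_l, Rabs_Ropp in Hy. lra.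
Qed.

Lemma deriv_continuous f x l : derivable_pt_lim f x l -> continuity_pt f x.
Proof. intros H. apply derivable_continuous_pt. now exists l. Qed.

Lemma incr_of_deriv_pos f f' s t : (forall x, derivable_pt_lim f x (f' x)) ->
  (forall x, s < x < t -> 0 < f' x) -> s < t -> f s < f t.
Proof.
  intros Hd Hpos Hst. destruct (MVT_cor2 f f' s t Hst) as [c [Hc Hcst]]; [auto|].
  assert (0 < f' c * (t - s)) by (apply Rmult_lt_0_compat; [apply Hpos; auto | lra]). lra.
Qed.

Lemma nondecr_of_deriv_nonneg f f' s t : (forall x, derivable_pt_lim f x (f' x)) ->
  (forall x, s < x < t -> 0 <= f' x) -> s <= t -> f s <= f t.
Proof.
  intros Hd Hpos [Hst | ->]; [|lra].
  destruct (MVT_cor2 f f' s t Hst) as [c [Hc Hcst]]; [auto|].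
  assert (0 <= f' c * (t - s)) by (apply Rmult_le_pos; [apply Hpos; auto | lra]). lra.
Qed.

(** * Limits at 0 and derivatives at a removable point *)

Definition lim0 (f : R -> R) (l : R) : Prop := limit1_in f (fun x => x <> 0) l 0.

Lemma lim0_ext f g l : (forall x, x <> 0 -> f x = g x) -> lim0 f l -> lim0 g l.
Proof.
  unfold lim0, limit1_in, limit_in; simpl; intros Hfg Hf eps Heps.
  destruct (Hf eps Heps) as [d [Hd Hx]]. exists d; split; [exact Hd|].
  intros x [Hx0 Hxd]. rewrite <- Hfg; auto.
Qed.

Lemma lim0_of_continuous f l : continuity_pt f 0 -> f 0 = l -> lim0 f l.
Proof.
  unfold lim0, continuity_pt, continue_in, limit1_in, limit_in, D_x, no_cond; simpl.
  intros Hf <- eps Heps. destruct (Hf eps Heps) as [d [Hd Hx]]. exists d; split; [exact Hd|].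
  intros x [Hx0 Hxd]. apply Hx. split; auto.
Qed.

Lemma continuous_of_lim0 f : lim0 f (f 0) -> continuity_pt f 0.
Proof.
  unfold lim0, continuity_pt, continue_in, limit1_in, limit_in, D_x, no_cond; simpl.
  intros Hf eps Heps. destruct (Hf eps Heps) as [d [Hd Hx]]. exists d; split; [exact Hd|].
  intros x [[_ Hx0] Hxd]. apply Hx. split; auto.
Qed.

Lemma lim0_comp F u l : continuity_pt F l -> lim0 u l -> lim0 (fun x => F (u x)) (F l).
Proof.
  unfold lim0, continuity_pt, continue_in, limit1_in, limit_in, D_x, no_cond; simpl.
  intros HF Hu eps Heps. destruct (HF eps Heps) as [d [Hd HFd]].
  destruct (Hu d Hd) as [d' [Hd' Hud']]. exists d'; split; [exact Hd'|].
  intros x Hx. destruct (Req_dec (u x) l) as [E|E].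
  - rewrite E, Rdist_eq. exact Heps.
  - apply HFd. split; [split|]; auto.
Qed.

Lemma lim0_diff_quot F l : derivable_pt_lim F 0 l -> lim0 (fun x => (F x - F 0) / x) l.
Proof.
  unfold lim0, limit1_in, limit_in; simpl; unfold Rdist. intros HF eps Heps.
  destruct (HF eps Heps) as [d Hd]. exists d; split; [apply cond_pos|].
  intros x [Hx0 Hxd]. rewrite Rminus_0_r in Hxd.
  specialize (Hd x Hx0 Hxd). now rewrite Rplus_0_l in Hd.
Qed.

Lemma deriv_of_lim0_diff_quot F l : lim0 (fun x => (F x - F 0) / x) l -> derivable_pt_lim F 0 l.
Proof.
  unfold lim0, limit1_in, limit_in; simpl; unfold Rdist. intros HF eps Heps.
  destruct (HF eps Heps) as [d [Hd Hx]]. exists (mkposreal d Hd); simpl.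
  intros h Hh Hhd. rewrite Rplus_0_l. apply Hx. now rewrite Rminus_0_r.
Qed.

Section LHopital.

Variables f g f' g' : R -> R.
Hypothesis f0 : f 0 = 0.
Hypothesis g0 : g 0 = 0.
Hypothesis f_cont0 : continuity_pt f 0.
Hypothesis g_cont0 : continuity_pt g 0.
Hypothesis f_deriv : forall x, x <> 0 -> derivable_pt_lim f x (f' x).
Hypothesis g_deriv : forall x, x <> 0 -> derivable_pt_lim g x (g' x).
Hypothesis g_neq0 : forall x, x <> 0 -> g x <> 0.
Hypothesis g'_neq0 : forall x, x <> 0 -> g' x <> 0.

Let f_cont c : continuity_pt f c.
Proof. destruct (Req_dec c 0) as [->|Hc]; [exact f_cont0 | eapply deriv_continuous, f_deriv, Hc]. Qed.

Let g_cont c : continuity_pt g c.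
Proof. destruct (Req_dec c 0) as [->|Hc]; [exact g_cont0 | eapply deriv_continuous, g_deriv, Hc]. Qed.

Let cauchy_mvt s t : s < t -> (forall c, s < c < t -> c <> 0) ->
  exists c, s < c < t /\ (g t - g s) * f' c = (f t - f s) * g' c.
Proof.
  intros Hst Hnz.
  pose (pf := fun c (P : s < c < t) =>
    exist (fun l => derivable_pt_abs f c l) (f' c) (f_deriv c (Hnz c P))).
  pose (pg := fun c (P : s < c < t) =>
    exist (fun l => derivable_pt_abs g c l) (g' c) (g_deriv c (Hnz c P))).
  destruct (MVT f g s t pf pg Hst (fun c _ => f_cont c) (fun c _ => g_cont c)) as [c [P HP]].
  now exists c.
Qed.

Let quotient_mvt x : x <> 0 ->
  exists c, c <> 0 /\ Rabs c < Rabs x /\ f x / g x = f' c / g' c.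
Proof.
  intros Hx. assert (gx := g_neq0 x Hx).
  destruct (Rlt_or_le 0 x) as [Hpos | Hneg].
  - destruct (cauchy_mvt 0 x Hpos) as [c [Hc Heq]]; [intros; lra|].
    rewrite f0, g0, !Rminus_0_r in Heq. assert (g'c := g'_neq0 c ltac:(lra)).
    exists c; split; [lra|split].
    + rewrite !Rabs_right; lra.
    + field_simplify_eq; auto.
  - destruct (cauchy_mvt x 0 ltac:(lra)) as [c [Hc Heq]]; [intros; lra|].
    rewrite f0, g0 in Heq. assert (g'c := g'_neq0 c ltac:(lra)).
    exists c; split; [lra|split].
    + rewrite !Rabs_left; lra.
    + field_simplify_eq; auto. lra.
Qed.

Lemma lhopital0 l : lim0 (fun x => f' x / g' x) l -> lim0 (fun x => f x / g x) l.
Proof.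
  unfold lim0, limit1_in, limit_in; simpl; unfold Rdist.
  intros Hl eps Heps. destruct (Hl eps Heps) as [d [Hd Hx]]. exists d; split; [exact Hd|].
  intros x [Hx0 Hxd]. destruct (quotient_mvt x Hx0) as [c [Hc0 [Hcx ->]]].
  apply Hx. rewrite Rminus_0_r in *. split; [exact Hc0 | lra].
Qed.

End LHopital.

Lemma deriv_at0_of_lim F F' l : continuity_pt F 0 ->
  (forall x, x <> 0 -> derivable_pt_lim F x (F' x)) -> lim0 F' l -> derivable_pt_lim F 0 l.
Proof.
  intros HF0 HF HF'. apply deriv_of_lim0_diff_quot.
  apply (lhopital0 (fun x => F x - F 0) (fun x => x) F' (fun _ => 1)).
  - ring.
  - reflexivity.
  - apply continuity_pt_minus; [exact HF0 | apply continuity_pt_const; intros ? ?; reflexivity].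
  - apply derivable_continuous_pt, derivable_pt_id.
  - intros x Hx. eapply deriv_eq.
    + apply deriv_minus; [apply HF, Hx | apply derivable_pt_lim_const].
    + ring.
  - intros x _. apply derivable_pt_lim_id.
  - intros x Hx. exact Hx.
  - intros; lra.
  - eapply lim0_ext; [|exact HF']. intros; simpl; field.
Qed.

Lemma lhopital0_smooth f g f' g' l : f 0 = 0 -> g 0 = 0 ->
  (forall x, derivable_pt_lim f x (f' x)) -> (forall x, derivable_pt_lim g x (g' x)) ->
  (forall x, x <> 0 -> g x <> 0) -> (forall x, x <> 0 -> g' x <> 0) ->
  lim0 (fun x => f' x / g' x) l -> lim0 (fun x => f x / g x) l.
Proof.
  intros f0 g0 Hf Hg Hg0 Hg'0. apply (lhopital0 f g f' g'); auto.
  - eapply deriv_continuous, Hf.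
  - eapply deriv_continuous, Hg.
Qed.

Lemma exp_opp_mult x : exp (- x) * exp x = 1.
Proof. rewrite <- exp_plus, Rplus_opp_l. apply exp_0. Qed.

Lemma cosh_sq_sub_sinh_sq x : cosh x * cosh x - sinh x * sinh x = 1.
Proof. rewrite <- (exp_opp_mult x). unfold cosh, sinh. field. Qed.

Lemma sinh_opp x : sinh (- x) = - sinh x.
Proof. unfold sinh. rewrite Ropp_involutive. field. Qed.

Lemma cosh_opp x : cosh (- x) = cosh x.
Proof. unfold cosh. rewrite Ropp_involutive. field. Qed.

Lemma cosh_pos x : 0 < cosh x.
Proof. unfold cosh. pose proof (exp_pos x). pose proof (exp_pos (- x)). lra. Qed.

Lemma sinh_pos x : 0 < x -> 0 < sinh x.
Proof. intros Hx. rewrite <- sinh_0. now apply sinh_lt. Qed.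

Lemma sinh_neg x : x < 0 -> sinh x < 0.
Proof. intros Hx. rewrite <- sinh_0. now apply sinh_lt. Qed.

Lemma sinh_neq0 x : x <> 0 -> sinh x <> 0.
Proof.
  intros Hx. destruct (Rlt_or_le x 0) as [Hneg | Hpos].
  - pose proof (sinh_neg x Hneg); lra.
  - pose proof (sinh_pos x ltac:(lra)); lra.
Qed.

(* [cosh x = 1 + 2 sinh (x/2)^2], hence [cosh x > 1] off 0. *)
Lemma cosh_gt1 x : x <> 0 -> 1 < cosh x.
Proof.
  intros Hx.
  assert (Hhalf : cosh x = 1 + 2 * (sinh (x / 2) * sinh (x / 2))).
  { assert (E1 : exp x = exp (x / 2) * exp (x / 2)) by (rewrite <- exp_plus; f_equal; field).
    assert (E2 : exp (- x) = exp (- (x / 2)) * exp (- (x / 2))) by (rewrite <- exp_plus; f_equal; field).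
    pose proof (exp_opp_mult (x / 2)).
    unfold cosh, sinh. rewrite E1, E2. nra. }
  assert (sinh (x / 2) <> 0) by (apply sinh_neq0; lra).
  assert (0 < sinh (x / 2) * sinh (x / 2)) by (apply Rsqr_pos_lt; assumption). lra.
Qed.

Lemma sinh_gt_id x : 0 < x -> x < sinh x.
Proof.
  intros Hx.
  enough (sinh 0 - 0 < sinh x - x) by (rewrite sinh_0 in *; lra).
  apply (incr_of_deriv_pos (fun y => sinh y - y) (fun y => cosh y - 1)); [| |exact Hx].
  - intros y. apply deriv_minus; [apply derivable_pt_lim_sinh | apply derivable_pt_lim_id].
  - intros y Hy. pose proof (cosh_gt1 y ltac:(lra)). lra.
Qed.

Lemma sq_lt_sinh_sq x : x <> 0 -> x * x < sinh x * sinh x.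
Proof.
  intros Hx. destruct (Rlt_or_le x 0) as [Hneg | Hpos].
  - pose proof (sinh_gt_id (- x) ltac:(lra)). rewrite sinh_opp in *. nra.
  - pose proof (sinh_gt_id x ltac:(lra)). nra.
Qed.

(** ** The inequality [x^3 cosh x <= sinh^3 x] for [x > 0]

    Equivalently [x <= sinh x / cosh(x)^(1/3)]: the right-hand side minus [x]
    vanishes at 0 and has derivative [(u^2 - 1)^2 (2 u^2 + 1) / (3 u^4)] with
    [u = cosh(x)^(1/3)]. *)

Definition cbrt (x : R) : R := exp (ln x / 3).

Lemma cbrt_pos x : 0 < cbrt x.
Proof. apply exp_pos. Qed.

Lemma cbrt_cube x : 0 < x -> cbrt x * cbrt x * cbrt x = x.
Proof.
  intros Hx. unfold cbrt. rewrite <- !exp_plus.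
  replace (ln x / 3 + ln x / 3 + ln x / 3) with (ln x) by field. now apply exp_ln.
Qed.

Lemma deriv_cbrt_cosh y :
  derivable_pt_lim (fun z => cbrt (cosh z)) y (cbrt (cosh y) * (sinh y / cosh y) / 3).
Proof.
  unfold cbrt. pose proof (cosh_pos y). eapply deriv_eq.
  - apply (deriv_comp (fun z => ln (cosh z) / 3) exp); [|apply derivable_pt_lim_exp].
    apply (deriv_div (fun z => ln (cosh z)) (fun _ => 3)); [| apply derivable_pt_lim_const | lra].
    apply (deriv_comp cosh ln); [apply derivable_pt_lim_cosh | now apply derivable_pt_lim_ln].
  - field. lra.
Qed.

Lemma deriv_sinh_div_cbrt_cosh y :
  let u := cbrt (cosh y) in
  derivable_pt_lim (fun z => sinh z / cbrt (cosh z) - z) y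
    ((u * u - 1) * (u * u - 1) * (2 * (u * u) + 1) / (3 * (u * u * u * u))).
Proof.
  intros u. assert (Hu : 0 < u) by apply cbrt_pos.
  assert (Hu3 : cosh y = u * u * u) by (symmetry; apply cbrt_cube, cosh_pos).
  assert (Hsh : sinh y * sinh y = (u * u * u) * (u * u * u) - 1)
    by (rewrite <- Hu3; pose proof (cosh_sq_sub_sinh_sq y); lra).
  eapply deriv_eq.
  - apply deriv_minus; [|apply derivable_pt_lim_id].
    apply (deriv_div sinh (fun z => cbrt (cosh z)));
      [apply derivable_pt_lim_sinh | apply deriv_cbrt_cosh | fold u; lra].
  - fold u. rewrite Hu3.
    replace (u * (sinh y / (u * u * u)) / 3 * sinh y)
      with (u * (sinh y * sinh y) / (u * u * u) / 3) by (field; lra).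
    rewrite Hsh. field. lra.
Qed.

Lemma id_le_sinh_div_cbrt_cosh x : 0 <= x -> x <= sinh x / cbrt (cosh x).
Proof.
  intros Hx.
  enough (sinh 0 / cbrt (cosh 0) - 0 <= sinh x / cbrt (cosh x) - x)
    by (rewrite sinh_0 in *; unfold Rdiv in *; lra).
  apply (nondecr_of_deriv_nonneg _ _ 0 x deriv_sinh_div_cbrt_cosh); [|exact Hx].
  intros y _; cbv zeta. set (u := cbrt (cosh y)). assert (Hu : 0 < u) by apply cbrt_pos.
  assert (Hu2 : 0 < u * u) by nra.
  unfold Rdiv; apply Rmult_le_pos; [|apply Rlt_le, Rinv_0_lt_compat; nra].
  apply Rmult_le_pos; [apply Rle_0_sqr | nra].
Qed.

Lemma cube_cosh_le_sinh_cube x : 0 < x -> x * x * x * cosh x <= sinh x * sinh x * sinh x.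
Proof.
  intros Hx. set (u := cbrt (cosh x)). assert (Hu : 0 < u) by apply cbrt_pos.
  assert (Hu3 : cosh x = u * u * u) by (symmetry; apply cbrt_cube, cosh_pos).
  assert (Hxu : x * u <= sinh x).
  { pose proof (id_le_sinh_div_cbrt_cosh x ltac:(lra)) as H. fold u in H.
    apply Rmult_le_reg_r with (/ u); [now apply Rinv_0_lt_compat|].
    replace (x * u * / u) with x by (field; lra). exact H. }
  rewrite Hu3. replace (x * x * x * (u * u * u)) with ((x * u) ^ 3) by ring.
  replace (sinh x * sinh x * sinh x) with (sinh x ^ 3) by ring.
  apply pow_incr. split; [nra | exact Hxu].
Qed.

(** * The normalized function [phi = ln (sinh x / x)] and its derivatives

    [phi1 = coth x - 1/x], [phi2 = 1/x^2 - 1/sinh^2 x] and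
    [phi3 = -2/x^3 + 2 cosh x / sinh^3 x] are the successive derivatives of
    [phi]; [phi], [phi1] and [phi2] are given their limit values at 0. *)

Definition sinhc (x : R) : R := sinh x / x.
Definition phi (x : R) : R := if Req_EM_T x 0 then 0 else ln (sinhc x).
Definition phi1 (x : R) : R := if Req_EM_T x 0 then 0 else cosh x / sinh x - 1 / x.
Definition phi2 (x : R) : R :=
  if Req_EM_T x 0 then 1 / 3 else 1 / (x * x) - 1 / (sinh x * sinh x).
Definition phi3 (x : R) : R := - 2 / (x * x * x) + 2 * cosh x / (sinh x * sinh x * sinh x).

Lemma sinhc_pos x : x <> 0 -> 0 < sinhc x.
Proof.
  intros Hx. unfold sinhc. destruct (Rlt_or_le x 0) as [Hneg | Hpos].
  - pose proof (sinh_neg x Hneg).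
    replace (sinh x / x) with (- sinh x / - x) by (field; exact Hx).
    apply Rdiv_lt_0_compat; lra.
  - pose proof (sinh_pos x ltac:(lra)). apply Rdiv_lt_0_compat; lra.
Qed.

(* [sinh x / x -> sinh'(0) = 1]. *)
Lemma lim0_sinhc : lim0 sinhc 1.
Proof.
  pose proof (lim0_diff_quot sinh _ (derivable_pt_lim_sinh 0)) as H.
  rewrite cosh_0 in H. eapply lim0_ext; [|exact H].
  intros x _. unfold sinhc. now rewrite sinh_0, Rminus_0_r.
Qed.

Lemma lim0_sinhc_sq : lim0 (fun x => sinhc x * sinhc x) 1.
Proof.
  pose proof (limit_mul _ _ _ _ _ _ lim0_sinhc lim0_sinhc) as H.
  now rewrite Rmult_1_l in H.
Qed.

(* [phi1 x = (x cosh x - sinh x) / x^2 * (1 / sinhc x)], and the first factor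
   tends to 0 by L'Hopital (its derivative quotient is [sinh x / 2]). *)
Lemma lim0_phi1 : lim0 phi1 0.
Proof.
  assert (Hnum : lim0 (fun x => (x * cosh x - sinh x) / (x * x)) 0).
  { apply (lhopital0_smooth _ _ (fun x => x * sinh x) (fun x => 2 * x)).
    - now rewrite sinh_0, Rmult_0_l, Rminus_0_r.
    - apply Rmult_0_l.
    - intros x. eapply deriv_eq.
      + apply deriv_minus; [|apply derivable_pt_lim_sinh].
        apply deriv_mult; [apply derivable_pt_lim_id | apply derivable_pt_lim_cosh].
      + cbv beta; ring.
    - intros x. eapply deriv_eq; [apply deriv_mult; apply derivable_pt_lim_id | cbv beta; ring].
    - intros x Hx. now apply Rmult_integral_contrapositive.
    - intros x Hx. lra.
    - apply (lim0_ext (fun x => sinh x / 2)); [intros x Hx; field; exact Hx|].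
      apply lim0_of_continuous.
      + apply (deriv_continuous _ _ (cosh 0 / 2)). eapply deriv_eq.
        * apply (deriv_div sinh (fun _ => 2));
            [apply derivable_pt_lim_sinh | apply derivable_pt_lim_const | lra].
        * field.
      + rewrite sinh_0. field. }
  pose proof (limit_mul _ _ _ _ _ _ Hnum (limit_inv _ _ _ _ lim0_sinhc ltac:(lra))) as H.
  rewrite Rmult_0_l in H. eapply lim0_ext; [|exact H].
  intros x Hx. unfold phi1, sinhc. destruct (Req_EM_T x 0); [contradiction|].
  pose proof (sinh_neq0 x Hx). field. auto.
Qed.

(* [phi2 x = (sinh^2 x - x^2) / x^4 * (1 / sinhc^2 x)]; two applications of
   L'Hopital reduce the first factor to [sinhc^2 x / 3]. *)
Lemma lim0_phi2 : lim0 phi2 (1 / 3).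
Proof.
  assert (Hderiv_quot : lim0 (fun x => (2 * sinh x * cosh x - 2 * x) / (4 * (x * x * x))) (1 / 3)).
  { apply (lhopital0_smooth _ _ (fun x => 2 * (cosh x * cosh x + sinh x * sinh x) - 2)
                                (fun x => 12 * (x * x))).
    - rewrite sinh_0. ring.
    - ring.
    - intros x. eapply deriv_eq.
      + apply deriv_minus;
          [|apply deriv_mult; [apply derivable_pt_lim_const | apply derivable_pt_lim_id]].
        apply deriv_mult; [|apply derivable_pt_lim_cosh].
        apply deriv_mult; [apply derivable_pt_lim_const | apply derivable_pt_lim_sinh].
      + cbv beta; ring.
    - intros x. eapply deriv_eq.
      + apply deriv_mult; [apply derivable_pt_lim_const|].
        apply deriv_mult; [apply deriv_mult|]; apply derivable_pt_lim_id.
      + cbv beta; ring.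
    - intros x Hx. repeat apply Rmult_integral_contrapositive; repeat split; auto; lra.
    - intros x Hx. repeat apply Rmult_integral_contrapositive; repeat split; auto; lra.
    - pose proof (limit_mul _ _ _ _ _ _ (limit_free (fun _ => 1 / 3) _ 0 0) lim0_sinhc_sq) as H.
      simpl in H. rewrite Rmult_1_r in H. eapply lim0_ext; [|exact H].
      intros x Hx. unfold sinhc. pose proof (cosh_sq_sub_sinh_sq x).
      replace (cosh x * cosh x) with (1 + sinh x * sinh x) by lra.
      field. exact Hx. }
  assert (Hquot : lim0 (fun x => (sinh x * sinh x - x * x) / (x * x * x * x)) (1 / 3)).
  { apply (lhopital0_smooth _ _ (fun x => 2 * sinh x * cosh x - 2 * x)
                                (fun x => 4 * (x * x * x))); [| | | | | |exact Hderiv_quot].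
    - rewrite sinh_0. ring.
    - ring.
    - intros x. eapply deriv_eq.
      + apply deriv_minus; apply deriv_mult;
          solve [apply derivable_pt_lim_sinh | apply derivable_pt_lim_id].
      + cbv beta; ring.
    - intros x. eapply deriv_eq.
      + apply deriv_mult; [apply deriv_mult; [apply deriv_mult|]|]; apply derivable_pt_lim_id.
      + cbv beta; ring.
    - intros x Hx. repeat apply Rmult_integral_contrapositive; repeat split; auto; lra.
    - intros x Hx. repeat apply Rmult_integral_contrapositive; repeat split; auto; lra. }
  pose proof (limit_mul _ _ _ _ _ _ Hquot (limit_inv _ _ _ _ lim0_sinhc_sq ltac:(lra))) as H.
  rewrite Rinv_1, Rmult_1_r in H. eapply lim0_ext; [|exact H].
  intros x Hx. unfold phi2, sinhc. destruct (Req_EM_T x 0); [contradiction|].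
  pose proof (sinh_neq0 x Hx). field. auto.
Qed.

Lemma deriv_phi_off0 x : x <> 0 -> derivable_pt_lim phi x (phi1 x).
Proof.
  intros Hx. apply (deriv_off0 _ (fun y => ln (sinhc y)) _ _ Hx).
  { intros y Hy. unfold phi. now destruct (Req_EM_T y 0). }
  pose proof (sinhc_pos x Hx). pose proof (sinh_neq0 x Hx). eapply deriv_eq.
  - apply (deriv_comp sinhc ln); [|now apply derivable_pt_lim_ln].
    apply deriv_div; [apply derivable_pt_lim_sinh | apply derivable_pt_lim_id | exact Hx].
  - unfold phi1, sinhc. destruct (Req_EM_T x 0); [contradiction|]. field. auto.
Qed.

Lemma deriv_phi1_off0 x : x <> 0 -> derivable_pt_lim phi1 x (phi2 x).
Proof.
  intros Hx. apply (deriv_off0 _ (fun y => cosh y / sinh y - 1 / y) _ _ Hx).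
  { intros y Hy. unfold phi1. now destruct (Req_EM_T y 0). }
  pose proof (sinh_neq0 x Hx). pose proof (cosh_sq_sub_sinh_sq x). eapply deriv_eq.
  - apply deriv_minus.
    + apply deriv_div; [apply derivable_pt_lim_cosh | apply derivable_pt_lim_sinh | auto].
    + apply deriv_div; [apply derivable_pt_lim_const | apply derivable_pt_lim_id | exact Hx].
  - unfold phi2. destruct (Req_EM_T x 0); [contradiction|].
    replace (sinh x * sinh x - cosh x * cosh x) with (-1) by lra. field. auto.
Qed.

Lemma deriv_phi2_off0 x : x <> 0 -> derivable_pt_lim phi2 x (phi3 x).
Proof.
  intros Hx. apply (deriv_off0 _ (fun y => 1 / (y * y) - 1 / (sinh y * sinh y)) _ _ Hx).
  { intros y Hy. unfold phi2. now destruct (Req_EM_T y 0). }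
  pose proof (sinh_neq0 x Hx). eapply deriv_eq.
  - apply deriv_minus; apply deriv_div; try apply derivable_pt_lim_const;
      try (apply Rmult_integral_contrapositive; split; auto); apply deriv_mult;
      solve [apply derivable_pt_lim_id | apply derivable_pt_lim_sinh].
  - unfold phi3. field. auto.
Qed.

Lemma deriv_phi x : derivable_pt_lim phi x (phi1 x).
Proof.
  destruct (Req_dec x 0) as [->|Hx]; [|now apply deriv_phi_off0].
  replace (phi1 0) with 0 by (unfold phi1; now destruct (Req_EM_T 0 0)).
  apply (deriv_at0_of_lim phi phi1); [|exact deriv_phi_off0 | exact lim0_phi1].
  apply continuous_of_lim0. replace (phi 0) with (ln 1)
    by (unfold phi; destruct (Req_EM_T 0 0); [apply ln_1 | lra]).
  apply (lim0_ext (fun x => ln (sinhc x))).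
  { intros x Hx. unfold phi. now destruct (Req_EM_T x 0). }
  apply lim0_comp; [|exact lim0_sinhc].
  apply (deriv_continuous _ _ (/ 1)), derivable_pt_lim_ln. lra.
Qed.

Lemma deriv_phi1 x : derivable_pt_lim phi1 x (phi2 x).
Proof.
  destruct (Req_dec x 0) as [->|Hx]; [|now apply deriv_phi1_off0].
  replace (phi2 0) with (1 / 3) by (unfold phi2; now destruct (Req_EM_T 0 0)).
  apply (deriv_at0_of_lim phi1 phi2); [|exact deriv_phi1_off0 | exact lim0_phi2].
  apply continuous_of_lim0. replace (phi1 0) with 0 by (unfold phi1; now destruct (Req_EM_T 0 0)).
  exact lim0_phi1.
Qed.

(* [phi2 > 0] is [|sinh x| > |x|]: [phi] is strictly convex. *)
Lemma phi2_pos x : 0 < phi2 x.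
Proof.
  unfold phi2. destruct (Req_EM_T x 0) as [_|Hx]; [lra|].
  pose proof (sq_lt_sinh_sq x Hx). assert (0 < x * x) by nra.
  apply Rlt_0_minus. unfold Rdiv. rewrite !Rmult_1_l.
  apply Rinv_lt_contravar; nra.
Qed.

Lemma phi1_incr s t : s < t -> phi1 s < phi1 t.
Proof. apply incr_of_deriv_pos with phi2; [exact deriv_phi1 | intros; apply phi2_pos]. Qed.

(* [phi3 <= 0] on [(0, oo)] is the inequality [x^3 cosh x <= sinh^3 x]. *)
Lemma phi3_nonpos x : 0 < x -> phi3 x <= 0.
Proof.
  intros Hx. pose proof (cube_cosh_le_sinh_cube x Hx). pose proof (sinh_pos x Hx).
  assert (Hx3 : 0 < x * x * x) by (apply Rmult_lt_0_compat; [apply Rmult_lt_0_compat|]; lra).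
  assert (Hs3 : 0 < sinh x * sinh x * sinh x) by (apply Rmult_lt_0_compat; [apply Rmult_lt_0_compat|]; lra).
  unfold phi3.
  replace (-2 / (x * x * x) + 2 * cosh x / (sinh x * sinh x * sinh x)) with
    (- (2 * (sinh x * sinh x * sinh x - x * x * x * cosh x)
        * / (x * x * x * (sinh x * sinh x * sinh x)))) by (field; lra).
  enough (0 <= 2 * (sinh x * sinh x * sinh x - x * x * x * cosh x)
               * / (x * x * x * (sinh x * sinh x * sinh x))) by lra.
  apply Rmult_le_pos; [lra|].
  apply Rlt_le, Rinv_0_lt_compat. now apply Rmult_lt_0_compat.
Qed.

Lemma phi3_odd x : phi3 (- x) = - phi3 x.
Proof.
  unfold phi3. rewrite sinh_opp, cosh_opp.
  destruct (Req_dec x 0) as [->|Hx].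
  - rewrite sinh_0, Ropp_0. unfold Rdiv. rewrite !Rmult_0_l, Rinv_0. ring.
  - pose proof (sinh_neq0 x Hx). field. auto.
Qed.

Lemma phi1_odd x : phi1 (- x) = - phi1 x.
Proof.
  unfold phi1. destruct (Req_EM_T (- x) 0); destruct (Req_EM_T x 0); try lra.
  rewrite sinh_opp, cosh_opp. pose proof (sinh_neq0 x n0). field. auto.
Qed.

(* [0 < coth x - 1 = 2 / (e^(2x) - 1) < 1/x] since [e^(2x) > 1 + 2x]. *)
Lemma phi1_near_1 x : 0 < x -> Rabs (phi1 x - 1) <= 1 / x.
Proof.
  intros Hx. unfold phi1. destruct (Req_EM_T x 0); [lra|]. unfold cosh, sinh.
  pose proof (exp_ineq1 (2 * x) ltac:(lra)).
  assert (HP : exp (2 * x) = exp x * exp x) by (rewrite <- exp_plus; f_equal; ring).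
  rewrite exp_Ropp. pose proof (exp_pos x). set (P := exp x) in *.
  assert (1 < P * P) by lra.
  replace ((P + / P) / 2 / ((P - / P) / 2) - 1 / x - 1) with (2 / (P * P - 1) - 1 / x)
    by (field; nra).
  assert (0 < 2 / (P * P - 1)) by (apply Rdiv_lt_0_compat; lra).
  assert (2 / (P * P - 1) <= 1 / x).
  { apply Rmult_le_reg_r with ((P * P - 1) * x); [nra|]. field_simplify; nra. }
  assert (0 < 1 / x) by (apply Rdiv_lt_0_compat; lra).
  apply Rabs_le. lra.
Qed.

(** With [c = (ln a + ln b) / 2] and [d = (ln b - ln a) / 2 > 0] one has
    [b^t = e^(ct) e^(dt)] and [a^t = e^(ct) e^(-dt)], hence
    [g_{a,b}(t) = e^(ct) * 2d * sinhc (dt)] and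
    [ln g_{a,b}(t) = ct + ln (2d) + phi (dt)]. *)

Definition lnmid (a b : R) : R := (ln a + ln b) / 2.
Definition lnrad (a b : R) : R := (ln b - ln a) / 2.

Definition lng_d2 (a b t : R) : R := lnrad a b * lnrad a b * phi2 (lnrad a b * t).
Definition lng_d3 (a b t : R) : R :=
  lnrad a b * lnrad a b * lnrad a b * phi3 (lnrad a b * t).

Section Reduction.

Variables a b : R.
Hypothesis a_pos : 0 < a.
Hypothesis a_lt_b : a < b.

Let c := lnmid a b.
Let d := lnrad a b.

Lemma lnrad_pos : 0 < d.
Proof. unfold d, lnrad. pose proof (ln_increasing a b a_pos a_lt_b). lra. Qed.

Lemma lnrad_mult_neq0 t : t <> 0 -> d * t <> 0.
Proof. intros Ht. pose proof lnrad_pos as Hd. apply Rmult_integral_contrapositive; split; lra. Qed.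

Lemma ln_a_eq : ln a = c - d.
Proof. unfold c, d, lnmid, lnrad. field. Qed.

Lemma ln_b_eq : ln b = c + d.
Proof. unfold c, d, lnmid, lnrad. field. Qed.

Lemma rpower_b t : Rpower b t = exp (t * c) * exp (d * t).
Proof. unfold Rpower. rewrite <- exp_plus, ln_b_eq. f_equal. ring. Qed.

Lemma rpower_a t : Rpower a t = exp (t * c) * exp (- (d * t)).
Proof. unfold Rpower. rewrite <- exp_plus, ln_a_eq. f_equal. ring. Qed.

Lemma g_repr t : t <> 0 -> g_ab a b t = exp (t * c) * (2 * d) * sinhc (d * t).
Proof.
  intros Ht. pose proof lnrad_pos as Hd. unfold g_ab. destruct (Req_EM_T t 0); [contradiction|].
  rewrite rpower_a, rpower_b. unfold sinhc, sinh. field. split; lra.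
Qed.

Lemma g_pos t : 0 < g_ab a b t.
Proof.
  destruct (Req_dec t 0) as [->|Ht].
  - unfold g_ab. destruct (Req_EM_T 0 0); [|lra]. pose proof (ln_increasing a b a_pos a_lt_b). lra.
  - rewrite (g_repr t Ht). pose proof lnrad_pos as Hd. pose proof (exp_pos (t * c)).
    pose proof (sinhc_pos _ (lnrad_mult_neq0 t Ht)).
    apply Rmult_lt_0_compat; [apply Rmult_lt_0_compat|]; lra.
Qed.

Lemma lng_repr t : lng_ab a b t = t * c + ln (2 * d) + phi (d * t).
Proof.
  pose proof lnrad_pos as Hd. unfold lng_ab. destruct (Req_dec t 0) as [->|Ht].
  - rewrite Rmult_0_r. unfold phi, g_ab. destruct (Req_EM_T 0 0); [|lra].
    rewrite ln_a_eq, ln_b_eq. replace (c + d - (c - d)) with (2 * d) by ring. ring.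
  - assert (Hdt := lnrad_mult_neq0 t Ht).
    rewrite (g_repr t Ht). unfold phi. destruct (Req_EM_T (d * t) 0); [contradiction|].
    pose proof (sinhc_pos _ Hdt). pose proof (exp_pos (t * c)).
    rewrite !ln_mult, ln_exp by first [assumption | lra | apply Rmult_lt_0_compat; lra]. ring.
Qed.

Lemma h_repr t : h_ab a b t = c + d * phi1 (d * t).
Proof.
  pose proof lnrad_pos as Hd. unfold h_ab. destruct (Req_EM_T t 0) as [->|Ht].
  - rewrite Rmult_0_r. unfold phi1. destruct (Req_EM_T 0 0); [|lra].
    rewrite <- Rpower_sqrt by (apply Rmult_lt_0_compat; lra).
    unfold Rpower. rewrite ln_exp, ln_mult, ln_a_eq, ln_b_eq by lra. field.
  - assert (Hdt := lnrad_mult_neq0 t Ht). pose proof (sinh_neq0 _ Hdt) as Hsh.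
    unfold phi1. destruct (Req_EM_T (d * t) 0); [contradiction|].
    rewrite rpower_a, rpower_b, ln_a_eq, ln_b_eq. unfold cosh, sinh in *.
    pose proof (exp_pos (t * c)) as He.
    assert (Hdiff : exp (d * t) - exp (- (d * t)) <> 0) by (intros Z; apply Hsh; rewrite Z; field).
    field. repeat split; try lra.
    intros Z. apply Hdiff. apply Rmult_eq_reg_l with (exp (t * c)); lra.
Qed.

Lemma deriv_lng t : derivable_pt_lim (lng_ab a b) t (h_ab a b t).
Proof.
  apply (deriv_ext _ (fun s => s * c + ln (2 * d) + phi (d * s))); [exact lng_repr|].
  eapply deriv_eq.
  - apply deriv_plus; [apply deriv_plus|].
    + apply deriv_mult; [apply derivable_pt_lim_id | apply derivable_pt_lim_const].
    + apply derivable_pt_lim_const.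
    + apply (deriv_rescale phi), deriv_phi.
  - rewrite h_repr. ring.
Qed.

Lemma deriv_h t : derivable_pt_lim (h_ab a b) t (lng_d2 a b t).
Proof.
  apply (deriv_ext _ (fun s => c + d * phi1 (d * s))); [exact h_repr|].
  eapply deriv_eq.
  - apply deriv_plus; [apply derivable_pt_lim_const|].
    apply deriv_mult; [apply derivable_pt_lim_const|].
    apply (deriv_rescale phi1), deriv_phi1.
  - unfold lng_d2. fold d. ring.
Qed.

Lemma deriv_lng_d2 t : t <> 0 -> derivable_pt_lim (lng_d2 a b) t (lng_d3 a b t).
Proof.
  intros Ht. unfold lng_d2, lng_d3. fold d. eapply deriv_eq.
  - apply deriv_mult; [apply derivable_pt_lim_const|].
    apply (deriv_rescale phi2), deriv_phi2_off0, lnrad_mult_neq0, Ht.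
  - cbv beta. ring.
Qed.

Lemma lng_d2_nonneg t : 0 <= lng_d2 a b t.
Proof.
  unfold lng_d2. fold d. pose proof lnrad_pos as Hd. pose proof (phi2_pos (d * t)).
  apply Rmult_le_pos; [apply Rmult_le_pos|]; lra.
Qed.

Lemma lng_d3_nonneg_neg t : t < 0 -> 0 <= lng_d3 a b t.
Proof.
  intros Ht. unfold lng_d3. fold d. pose proof lnrad_pos as Hd.
  pose proof (phi3_nonpos (- (d * t)) ltac:(nra)) as H. rewrite phi3_odd in H.
  apply Rmult_le_pos; [apply Rmult_le_pos; [apply Rmult_le_pos|]|]; lra.
Qed.

Lemma lng_d3_nonpos_pos t : 0 < t -> lng_d3 a b t <= 0.
Proof.
  intros Ht. unfold lng_d3. fold d. pose proof lnrad_pos as Hd.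
  pose proof (phi3_nonpos (d * t) ltac:(nra)).
  assert (0 < d * d * d) by (apply Rmult_lt_0_compat; [apply Rmult_lt_0_compat|]; lra). nra.
Qed.

Lemma h_incr s t : s < t -> h_ab a b s < h_ab a b t.
Proof.
  intros Hst. rewrite !h_repr. pose proof lnrad_pos as Hd.
  pose proof (phi1_incr (d * s) (d * t) ltac:(nra)). nra.
Qed.

Lemma h_near_ln_b t : 0 < t -> Rabs (h_ab a b t - ln b) <= 1 / t.
Proof.
  intros Ht. pose proof lnrad_pos as Hd. pose proof (phi1_near_1 (d * t) ltac:(nra)) as H.
  rewrite h_repr, ln_b_eq.
  replace (c + d * phi1 (d * t) - (c + d)) with (d * (phi1 (d * t) - 1)) by ring.
  rewrite Rabs_mult, (Rabs_right d) by lra.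
  replace (1 / t) with (d * (1 / (d * t))) by (field; lra).
  apply Rmult_le_compat_l; lra.
Qed.

Lemma h_near_ln_a t : 0 < t -> Rabs (h_ab a b (- t) - ln a) <= 1 / t.
Proof.
  intros Ht. pose proof lnrad_pos as Hd. pose proof (phi1_near_1 (d * t) ltac:(nra)) as H.
  rewrite h_repr, ln_a_eq.
  replace (d * - t) with (- (d * t)) by ring. rewrite phi1_odd.
  replace (c + d * - phi1 (d * t) - (c - d)) with (- (d * (phi1 (d * t) - 1))) by ring.
  rewrite Rabs_Ropp, Rabs_mult, (Rabs_right d) by lra.
  replace (1 / t) with (d * (1 / (d * t))) by (field; lra).
  apply Rmult_le_compat_l; lra.
Qed.

End Reduction.

Lemma lim_pinfty_of_bound (f : R -> R) (l : R) :
  (forall t, 0 < t -> Rabs (f t - l) <= 1 / t) ->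
  forall eps, 0 < eps -> exists M, forall t, M < t -> Rabs (f t - l) < eps.
Proof.
  intros Hf eps Heps. exists (1 / eps). intros t Ht.
  assert (Hinv : 0 < 1 / eps) by (apply Rdiv_lt_0_compat; lra).
  apply Rle_lt_trans with (1 / t); [apply Hf; lra|].
  apply Rmult_lt_reg_r with (t / eps); [apply Rdiv_lt_0_compat; lra|].
  replace (1 / t * (t / eps)) with (1 / eps) by (field; lra).
  replace (eps * (t / eps)) with t by (field; lra). exact Ht.
Qed.

Lemma lim_minfty_of_bound (f : R -> R) (l : R) :
  (forall t, 0 < t -> Rabs (f (- t) - l) <= 1 / t) ->
  forall eps, 0 < eps -> exists M, forall t, t < M -> Rabs (f t - l) < eps.
Proof.
  intros Hf eps Heps. destruct (lim_pinfty_of_bound (fun t => f (- t)) l Hf eps Heps) as [M HM].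
  exists (- M). intros t Ht. rewrite <- (Ropp_involutive t). apply HM. lra.
Qed.

Theorem theorem1 (a b : R) (ha : 0 < a) (hab : a < b) :
  (forall t, 0 < g_ab a b t) /\
  (exists d1 d2 d3 : R -> R,
     (forall t, derivable_pt_lim (lng_ab a b) t (d1 t)) /\
     (forall t, derivable_pt_lim d1 t (d2 t)) /\
     (forall t, t <> 0 -> derivable_pt_lim d2 t (d3 t)) /\
     (forall t, 0 <= d2 t) /\
     (forall t, t < 0 -> 0 <= d3 t) /\
     (forall t, 0 < t -> d3 t <= 0)) /\
  (forall t, derivable_pt_lim (lng_ab a b) t (h_ab a b t)) /\
  (forall s t, s < t -> h_ab a b s < h_ab a b t) /\
  (forall eps, 0 < eps -> exists M, forall t, t < M -> Rabs (h_ab a b t - ln a) < eps) /\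
  (forall eps, 0 < eps -> exists M, forall t, M < t -> Rabs (h_ab a b t - ln b) < eps).
Proof.
  split; [exact (g_pos a b ha hab)|].
  split.
  { exists (h_ab a b), (lng_d2 a b), (lng_d3 a b).
    repeat split.
    - exact (deriv_lng a b ha hab).
    - exact (deriv_h a b ha hab).
    - exact (deriv_lng_d2 a b ha hab).
    - exact (lng_d2_nonneg a b ha hab).
    - exact (lng_d3_nonneg_neg a b ha hab).
    - exact (lng_d3_nonpos_pos a b ha hab). }
  split; [exact (deriv_lng a b ha hab)|].
  split; [exact (h_incr a b ha hab)|].
  split.
  - exact (lim_minfty_of_bound _ _ (h_near_ln_a a b ha hab)).
  - exact (lim_pinfty_of_bound _ _ (h_near_ln_b a b ha hab)).
Qed.
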